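(* Let $s\ge1$ and let $A:[0,\infty)\to\mathbb R$ be continuous with $A(t)\ge-(t+1)^s$ for all $t\ge0$. Let $(d,\rho)$ solve $$\dot d=-\tfrac12 d^2+A(t)\rho^2-\rho+1,\qquad \dot\rho=-d\rho,$$ and let $(b,a)$ solve $$\dot b=-\tfrac12 b^2-(t+1)^s a^2-a+1,\qquad \dot a=-ba.$$ If $b(0)<d(0)$ and $0<\rho(0)<a(0)$, then $b(t)<d(t)$ and $0<\rho(t)<a(t)$ for all $t>0$ at which both solutions are defined. *)

From Stdlib Require Import Reals.
From Coquelicot Require Import Coquelicot.
Open Scope R_scope.

Definition solves_on (T : Rbar) (f f' : R -> R) : Prop :=
  (forall t, 0 < t -> Rbar_lt t T -> is_derive f t (f' t)) /\
  filterlim f (at_right 0) (locally (f 0)).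

Definition sol_drho (A : R -> R) (T : Rbar) (d rho : R -> R) : Prop :=
  solves_on T d (fun t => - / 2 * (d t)^2 + A t * (rho t)^2 - rho t + 1) /\
  solves_on T rho (fun t => - d t * rho t).

Definition sol_ba (s : R) (T : Rbar) (b a : R -> R) : Prop :=
  solves_on T b (fun t => - / 2 * (b t)^2 - Rpower (t + 1) s * (a t)^2 - a t + 1) /\
  solves_on T a (fun t => - b t * a t).

Definition continuous_on_nonneg (A : R -> R) : Prop :=
  (forall t, 0 < t -> continuous A t) /\
  filterlim A (at_right 0) (locally (A 0)).

(* Write u := d - b and v := a - rho.  The equations give
     rho' = - d rho,
     u'   = - (d + b)/2 u + (A + (t+1)^s) rho^2 + (t+1)^s (a^2 - rho^2) + v,
     v'   = - b v + rho u,
   so as long as rho, u, v are all positive and d, b stay bounded by M, each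
   of them satisfies w' >= - M w, hence w e^{M t} is nondecreasing and w stays
   positive.  A continuous-induction argument, started at a small time where
   the strict initial inequalities still hold, turns this into a global
   statement. *)

From Stdlib Require Import Reals Lra Classical.
From Coquelicot Require Import Coquelicot.
Open Scope R_scope.

Lemma at_right_interval (x : R) (P : R -> Prop) :
  at_right x P -> exists del, 0 < del /\ forall y, x < y < x + del -> P y.
Proof.
  intros [del Hdel]. exists del; split; [apply cond_pos|].
  intros y Hy. apply Hdel; [apply Rabs_lt_between'|]; lra.
Qed.

Lemma filterlim_lt_eventually {T : Type} {F : (T -> Prop) -> Prop} {FF : Filter F}
    (f g : T -> R) (lf lg : R) :
  filterlim f F (locally lf) -> filterlim g F (locally lg) -> lf < lg ->
  F (fun y => f y < g y).
Proof.
  intros Hf Hg Hlt.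
  set (m := (lf + lg) / 2).
  assert (Fm : F (fun y => f y < m))
    by exact (Hf (fun u => u < m) (open_lt m lf ltac:(unfold m; lra))).
  assert (Gm : F (fun y => m < g y))
    by exact (Hg (fun u => m < u) (open_gt m lg ltac:(unfold m; lra))).
  apply (filter_imp _ _ (fun y H => Rlt_trans (f y) m (g y) (proj1 H) (proj2 H))).
  exact (filter_and _ _ Fm Gm).
Qed.

Lemma is_derive_continuity_pt (f : R -> R) (x l : R) :
  is_derive f x l -> continuity_pt f x.
Proof.
  intros H. apply continuity_pt_filterlim.
  exact (ex_derive_continuous f x (ex_intro _ l H)).
Qed.

Lemma real_induction (P : R -> Prop) (lo hi : R) :
  lo <= hi -> P lo ->
  (forall x, lo < x <= hi -> (forall y, lo <= y < x -> P y) -> P x) ->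
  (forall x, lo <= x < hi -> P x -> at_right x P) ->
  P hi.
Proof.
  intros Hlohi Plo Hclosed Hopen.
  set (E := fun x => lo <= x <= hi /\ forall y, lo <= y <= x -> P y).
  assert (Elo : E lo).
  { split; [lra|]. intros y Hy. replace y with lo by lra. exact Plo. }
  assert (Ebound : bound E) by (exists hi; intros x Ex; apply Ex).
  destruct (completeness E Ebound (ex_intro _ lo Elo)) as [m [Hub Hlub]].
  assert (Hlom : lo <= m) by exact (Hub lo Elo).
  assert (Hmhi : m <= hi) by (apply Hlub; intros x Ex; apply Ex).
  assert (below_m : forall y, lo <= y < m -> P y).
  { intros y Hy. destruct (classic (exists x, E x /\ y <= x)) as [[x [Ex Hyx]]|Hnone].
    - apply Ex. lra.
    - assert (m <= y); [|lra].
      apply Hlub. intros x Ex. apply Rnot_lt_le. intros Hyx.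
      apply Hnone. exists x. split; [exact Ex|lra]. }
  assert (Pm : P m).
  { destruct (Req_dec m lo) as [->|Hne]; [exact Plo|].
    apply Hclosed; [lra|exact below_m]. }
  destruct (Req_dec m hi) as [<-|Hne]; [exact Pm|].
  destruct (at_right_interval m P (Hopen m ltac:(lra) Pm)) as [del [Hdel above_m]].
  set (z := Rmin (m + del / 2) hi).
  assert (Hz : m < z <= m + del / 2 /\ z <= hi).
  { unfold z. repeat split; [apply Rmin_glb_lt; lra|apply Rmin_l|apply Rmin_r]. }
  assert (Ez : E z).
  { split; [lra|]. intros y Hy.
    destruct (Rlt_le_dec y m); [apply below_m; lra|].
    destruct (Req_dec y m) as [->|]; [exact Pm|apply above_m; lra]. }
  pose proof (Hub z Ez). lra.
Qed.

Lemma nondecreasing_of_derive_nonneg (g g' : R -> R) (x y : R) :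
  x <= y ->
  (forall z, x < z < y -> is_derive g z (g' z)) ->
  (forall z, x <= z <= y -> continuity_pt g z) ->
  (forall z, x < z < y -> 0 <= g' z) ->
  g x <= g y.
Proof.
  intros Hxy Hder Hcont Hpos.
  (* The mean value point may be an endpoint, where [g'] is not controlled:
     the clipped derivative [Rmax 0 (g' z)] agrees with [g'] inside. *)
  destruct (MVT_gen g x y (fun z => Rmax 0 (g' z))) as [c [_ Hmvt]];
    rewrite ?Rmin_left, ?Rmax_right by lra.
  - intros z Hz. rewrite Rmax_right by (apply Hpos; exact Hz). apply Hder, Hz.
  - exact Hcont.
  - pose proof (Rmax_l 0 (g' c)). nra.
Qed.

Lemma pos_of_derive_ge_neg_mul (w w' : R -> R) (M x y : R) :
  x <= y ->
  (forall z, x < z < y -> is_derive w z (w' z)) ->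
  (forall z, x <= z <= y -> continuity_pt w z) ->
  (forall z, x < z < y -> - M * w z <= w' z) ->
  0 < w x -> 0 < w y.
Proof.
  intros Hxy Hder Hcont Hrate Hwx.
  assert (exp_der : forall z, is_derive (fun z => exp (M * z)) z (M * exp (M * z))).
  { intros z. auto_derive; [trivial|ring]. }
  assert (Hmono : w x * exp (M * x) <= w y * exp (M * y)).
  { apply (nondecreasing_of_derive_nonneg (fun z => w z * exp (M * z))
             (fun z => w' z * exp (M * z) + w z * (M * exp (M * z)))); [exact Hxy| | |].
    - intros z Hz.
      exact (is_derive_mult w _ z _ _ (Hder z Hz) (exp_der z) Rmult_comm).
    - intros z Hz. apply continuity_pt_mult; [apply Hcont, Hz|].
      exact (is_derive_continuity_pt _ _ _ (exp_der z)).
    - intros z Hz. pose proof (Hrate z Hz). pose proof (exp_pos (M * z)). nra. }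
  pose proof (exp_pos (M * x)). pose proof (exp_pos (M * y)). nra.
Qed.

Section Comparison.

Variables (s : R) (A d rho b a : R -> R).

Definition ordered (t : R) : Prop := b t < d t /\ 0 < rho t /\ rho t < a t.

Let d' t := - / 2 * (d t)^2 + A t * (rho t)^2 - rho t + 1.
Let rho' t := - d t * rho t.
Let b' t := - / 2 * (b t)^2 - Rpower (t + 1) s * (a t)^2 - a t + 1.
Let a' t := - b t * a t.

Lemma ordered_eventually {F : (R -> Prop) -> Prop} {FF : Filter F} (t0 : R) :
  filterlim d F (locally (d t0)) -> filterlim rho F (locally (rho t0)) ->
  filterlim b F (locally (b t0)) -> filterlim a F (locally (a t0)) ->
  ordered t0 -> F ordered.
Proof.
  intros Hd Hrho Hb Ha [Hbd [Hrho0 Hrhoa]].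
  apply filter_and; [exact (filterlim_lt_eventually b d _ _ Hb Hd Hbd)|].
  apply filter_and; [|exact (filterlim_lt_eventually rho a _ _ Hrho Ha Hrhoa)].
  exact (filterlim_lt_eventually (fun _ => 0) rho _ _ (filterlim_const 0) Hrho Hrho0).
Qed.

Lemma rho_rate (t M : R) : ordered t -> d t <= M -> - M * rho t <= rho' t.
Proof. intros [_ [Hrho _]] HM. unfold rho'. nra. Qed.

Lemma a_sub_rho_rate (t M : R) : ordered t -> b t <= M ->
  - M * (a t - rho t) <= a' t - rho' t.
Proof.
  intros [Hbd [Hrho Hrhoa]] HM. unfold a', rho'.
  assert (0 <= rho t * (d t - b t)) by nra.
  assert (0 <= (M - b t) * (a t - rho t)) by nra.
  nra.
Qed.

Hypothesis A_lower : forall t, 0 <= t -> A t >= - Rpower (t + 1) s.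

Lemma d_sub_b_rate (t M : R) : 0 <= t -> ordered t -> d t <= M -> b t <= M ->
  - M * (d t - b t) <= d' t - b' t.
Proof.
  intros Ht [Hbd [Hrho Hrhoa]] HdM HbM. unfold d', b'.
  assert (Hpow : 0 < Rpower (t + 1) s) by apply exp_pos.
  pose proof (A_lower t Ht).
  assert (0 <= (A t + Rpower (t + 1) s) * (rho t)^2) by (apply Rmult_le_pos; nra).
  assert (0 <= Rpower (t + 1) s * ((a t - rho t) * (a t + rho t))) by (apply Rmult_le_pos; nra).
  assert (0 <= (2 * M - d t - b t) * (d t - b t)) by nra.
  nra.
Qed.

Variable T : R.

Hypothesis d_deriv : forall t, 0 < t <= T -> is_derive d t (d' t).
Hypothesis rho_deriv : forall t, 0 < t <= T -> is_derive rho t (rho' t).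
Hypothesis b_deriv : forall t, 0 < t <= T -> is_derive b t (b' t).
Hypothesis a_deriv : forall t, 0 < t <= T -> is_derive a t (a' t).

Lemma ordered_closed (e x : R) : 0 < e < x -> x <= T ->
  (forall y, e <= y < x -> ordered y) -> ordered x.
Proof.
  intros He Hx Hbefore.
  assert (cont : forall f f' : R -> R,
                 (forall y, 0 < y <= T -> is_derive f y (f' y)) ->
                 forall y, e <= y <= x -> continuity_pt f y).
  { intros f f' Hf y Hy. apply (is_derive_continuity_pt f y (f' y)), Hf. lra. }
  pose proof (cont d d' d_deriv) as cont_d.
  pose proof (cont b b' b_deriv) as cont_b.
  pose proof (cont rho rho' rho_deriv) as cont_rho.
  pose proof (cont a a' a_deriv) as cont_a.
  destruct (continuity_ab_maj d e x ltac:(lra) cont_d) as [yd [Hyd _]].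
  destruct (continuity_ab_maj b e x ltac:(lra) cont_b) as [yb [Hyb _]].
  set (M := Rmax (d yd) (b yb)).
  assert (HdM : forall y, e <= y <= x -> d y <= M)
    by (intros y Hy; eapply Rle_trans; [apply Hyd, Hy|apply Rmax_l]).
  assert (HbM : forall y, e <= y <= x -> b y <= M)
    by (intros y Hy; eapply Rle_trans; [apply Hyb, Hy|apply Rmax_r]).
  destruct (Hbefore e ltac:(lra)) as [Hbd_e [Hrho_e Hrhoa_e]].
  split; [apply Rlt_0_minus|split; [|apply Rlt_0_minus]].
  - apply (pos_of_derive_ge_neg_mul (fun y => d y - b y) (fun y => d' y - b' y) M e x);
      [lra| | | |lra].
    + intros y Hy. apply (is_derive_minus d b); [apply d_deriv|apply b_deriv]; lra.
    + intros y Hy. apply continuity_pt_minus; [apply cont_d|apply cont_b]; exact Hy.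
    + intros y Hy. apply d_sub_b_rate; [lra|apply Hbefore|apply HdM|apply HbM]; lra.
  - apply (pos_of_derive_ge_neg_mul rho rho' M e x); [lra| | | |lra].
    + intros y Hy. apply rho_deriv. lra.
    + exact cont_rho.
    + intros y Hy. apply rho_rate; [apply Hbefore|apply HdM]; lra.
  - apply (pos_of_derive_ge_neg_mul (fun y => a y - rho y) (fun y => a' y - rho' y) M e x);
      [lra| | | |lra].
    + intros y Hy. apply (is_derive_minus a rho); [apply a_deriv|apply rho_deriv]; lra.
    + intros y Hy. apply continuity_pt_minus; [apply cont_a|apply cont_rho]; exact Hy.
    + intros y Hy. apply a_sub_rho_rate; [apply Hbefore|apply HbM]; lra.
Qed.

Lemma ordered_open (x : R) : 0 < x <= T -> ordered x -> at_right x ordered.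
Proof.
  intros Hx Hord.
  assert (Hnear : locally x ordered).
  { assert (cont : forall f f' : R -> R,
                   (forall y, 0 < y <= T -> is_derive f y (f' y)) -> continuous f x).
    { intros f f' Hf. exact (ex_derive_continuous f x (ex_intro _ (f' x) (Hf x Hx))). }
    exact (ordered_eventually x (cont d d' d_deriv) (cont rho rho' rho_deriv)
             (cont b b' b_deriv) (cont a a' a_deriv) Hord). }
  apply (filter_imp _ _ (fun y H _ => H) Hnear).
Qed.

Lemma ordered_propagates (e : R) : 0 < e <= T -> ordered e -> ordered T.
Proof.
  intros He Hord. apply (real_induction ordered e T); [lra|exact Hord| |].
  - intros x Hx Hbefore. apply (ordered_closed e x); [lra|lra|exact Hbefore].
  - intros x Hx Hordx. apply ordered_open; [lra|exact Hordx].
Qed.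

End Comparison.

Theorem lemma4p4 (s : R) (A d rho b a : R -> R) (T1 T2 : Rbar) :
  1 <= s ->
  continuous_on_nonneg A ->
  (forall t, 0 <= t -> A t >= - Rpower (t + 1) s) ->
  Rbar_lt 0 T1 -> sol_drho A T1 d rho ->
  Rbar_lt 0 T2 -> sol_ba s T2 b a ->
  b 0 < d 0 -> 0 < rho 0 -> rho 0 < a 0 ->
  forall t, 0 < t -> Rbar_lt t T1 -> Rbar_lt t T2 ->
    b t < d t /\ 0 < rho t /\ rho t < a t.
Proof.
  intros _ _ A_lower _ [[d_deriv d_cont0] [rho_deriv rho_cont0]]
    _ [[b_deriv b_cont0] [a_deriv a_cont0]] Hbd Hrho Hrhoa t Ht Ht1 Ht2.
  assert (in_domain : forall T y, Rbar_lt t T -> 0 < y <= t -> 0 < y /\ Rbar_lt y T).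
  { intros T y HT Hy. split; [lra|]. apply (Rbar_le_lt_trans y t T); [apply Hy|exact HT]. }
  assert (Hstart : at_right 0 (ordered d rho b a)).
  { apply (ordered_eventually d rho b a 0 d_cont0 rho_cont0 b_cont0 a_cont0).
    repeat split; assumption. }
  destruct (at_right_interval 0 _ Hstart) as [del [Hdel Hnear0]].
  apply (ordered_propagates s A d rho b a A_lower t) with (e := Rmin (del / 2) t).
  - intros y Hy. apply d_deriv; apply (in_domain T1 y Ht1 Hy).
  - intros y Hy. apply rho_deriv; apply (in_domain T1 y Ht1 Hy).
  - intros y Hy. apply b_deriv; apply (in_domain T2 y Ht2 Hy).
  - intros y Hy. apply a_deriv; apply (in_domain T2 y Ht2 Hy).
  - split; [apply Rmin_glb_lt; lra|apply Rmin_r].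
  - apply Hnear0. split; [apply Rmin_glb_lt|]; pose proof (Rmin_l (del / 2) t); lra.
Qed.
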